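(* Let $\mathcal{T}$ be a projective Fraïssé family of finite graphs that allows splitting edges, and let $\mathbb{G}$ be its projective Fraïssé limit. Then $\mathbb{G}$ is a prespace, i.e. the edge relation of $\mathbb{G}$ is an equivalence relation.
   Context: A graph $G$ is a set of vertices $V(G)$ with an edge set $E(G)\subseteq V(G)^2$ that is reflexive ($\langle a,a\rangle\in E(G)$ for all $a$) and symmetric. A topological graph is a graph with a compact, Hausdorff, zero-dimensional, second countable topology on $V(G)$ such that $E(G)$ is closed in $V(G)^2$; finite graphs carry the discrete topology. An epimorphism $g\colon B\to A$ of topological graphs is a continuous surjection such that for all $a_1,a_2\in A$: $\langle a_1,a_2\rangle\in E(A)$ iff there are $b_1\in g^{-1}(a_1)$, $b_2\in g^{-1}(a_2)$ with $\langle b_1,b_2\rangle\in E(B)$. A projective Fraïssé family is a class $\mathcal{F}$ of finite graphs together with a distinguished class of epimorphisms between them such that: there are countably many members up to isomorphism; the distinguished epimorphisms contain the identities and are closed under composition; (joint projection) for all $A,B\in\mathcal{F}$ there is $C\in\mathcal{F}$ with distinguished epimorphisms $C\to A$, $C\to B$; (projective amalgamation) for all distinguished $f\colon B\to A$, $g\colon C\to A$ there are $D\in\mathcal{F}$ and distinguished $h\colon D\to B$, $k\colon D\to C$ with $f\circ h=g\circ k$. A Fraïssé sequence for $\mathcal{F}$ is a sequence $(F_n)_{n<\omega}$ in $\mathcal{F}$ with distinguished epimorphisms $f^m_n\colon F_m\to F_n$ ($m\ge n$, compatible under composition) such that every $A\in\mathcal F$ admits a distinguished epimorphism $F_n\to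 A$ for some $n$, and for every distinguished epimorphism $f\colon A\to F_m$ there are $n\ge m$ and a distinguished $g\colon F_n\to A$ with $f\circ g=f^n_m$. Fraïssé sequences exist, and the projective Fraïssé limit $\mathbb{G}$ of $\mathcal{F}$ is (up to isomorphism) the inverse limit $\varprojlim F_n\subseteq\prod_n F_n$ with the product topology, where $\langle x,y\rangle\in E(\mathbb{G})$ iff $\langle x_n,y_n\rangle\in E(F_n)$ for all $n$. The family $\mathcal{T}$ allows splitting edges if for every $G\in\mathcal{T}$ and distinct $a,b\in V(G)$ with $\langle a,b\rangle\in E(G)$, the graph $H$ with $V(H)=V(G)\sqcup\{\ast\}$ whose nontrivial edges are those of $G$ except $\{a,b\}$, together with $\{a,\ast\}$ and $\{\ast,b\}$, belongs to $\mathcal{T}$, and the two maps $H\to G$ sending $\ast$ to $a$ (respectively to $b$) and fixing all other vertices are distinguished epimorphisms of $\mathcal{T}$. *)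

From mathcomp Require Import all_boot.
Set Warnings "-notation-overridden".
Set Implicit Arguments. Unset Strict Implicit. Unset Printing Implicit Defensive.

(* A finite graph: finite vertex set with a reflexive, symmetric edge relation
   (finite graphs carry the discrete topology, so no topology is needed). *)
Record fin_graph := FinGraph {
  vert :> finType;
  edge : rel vert;
  edge_refl : forall a, edge a a;
  edge_sym : forall a b, edge a b = edge b a
}.

(* Epimorphism of (finite) graphs: surjection such that
   <a1,a2> in E(A) iff some preimages are adjacent in B.  (Continuity is
   automatic for discrete spaces.) *)
Definition epimorphism (B A : fin_graph) (g : B -> A) : Prop :=
  (forall a : A, exists b : B, g b = a) /\
  (forall a1 a2 : A,
     edge a1 a2 <-> exists b1 b2 : B, [/\ g b1 = a1, g b2 = a2 & edge b1 b2]).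

Definition graph_iso (A B : fin_graph) : Prop :=
  exists (f : A -> B) (g : B -> A),
    cancel f g /\ cancel g f /\ (forall x y : A, edge (f x) (f y) = edge x y).

Record proj_fraisse_family := PFF {
  mem : fin_graph -> Prop;
  dist : forall B A : fin_graph, (B -> A) -> Prop;
  dist_epi : forall (B A : fin_graph) (g : B -> A), dist g -> [/\ mem B, mem A & epimorphism g];
  countable_iso : exists e : nat -> fin_graph,
      (forall n, mem (e n)) /\ (forall A : fin_graph, mem A -> exists n, graph_iso A (e n));
  dist_id : forall A : fin_graph, mem A -> dist (@id A);
  dist_comp : forall (C B A : fin_graph) (f : B -> A) (g : C -> B),
      dist f -> dist g -> dist (f \o g);
  joint_projection : forall A B : fin_graph, mem A -> mem B ->
      exists (C : fin_graph) (f : C -> A) (g : C -> B), [/\ mem C, dist f & dist g];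
  amalgamation : forall (A B C : fin_graph) (f : B -> A) (g : C -> A), dist f -> dist g ->
      exists (D : fin_graph) (h : D -> B) (k : D -> C),
        [/\ mem D, dist h, dist k & f \o h =1 g \o k]
}.

(* The graph obtained from G by splitting the edge {a,b}: new vertex None. *)
Section Split.
Variables (G : fin_graph) (a b : G).

Definition split_edge (x y : option G) : bool :=
  match x, y with
  | None, None => true
  | None, Some y => (y == a) || (y == b)
  | Some x, None => (x == a) || (x == b)
  | Some x, Some y =>
      edge x y &&
        ((x == y) || ~~ (((x == a) && (y == b)) || ((x == b) && (y == a))))
  end.

Lemma split_edge_refl (x : option G) : split_edge x x.
Proof. by case: x => [x|] //=; rewrite edge_refl eqxx. Qed.

Lemma split_edge_sym (x y : option G) : split_edge x y = split_edge y x.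
Proof.
case: x => [x|]; case: y => [y|] //=.
rewrite edge_sym [y == x]eq_sym; congr (_ && (_ || ~~ _)).
by rewrite orbC andbC [(y == b) && _]andbC.
Qed.

Definition split_graph : fin_graph :=
  @FinGraph (option G) split_edge split_edge_refl split_edge_sym.

Definition split_to (c : G) (x : split_graph) : G :=
  if x is Some y then y else c.
End Split.

Definition allows_splitting_edges (T : proj_fraisse_family) : Prop :=
  forall G : fin_graph, mem T G -> forall a b : G, a != b -> edge a b ->
    [/\ mem T (split_graph a b),
        dist T (@split_to G a b a) & dist T (@split_to G a b b)].

(* Fraisse sequence (F_n, f^m_n) for T; f m n is meaningful for n <= m. *)
Definition fraisse_sequence (T : proj_fraisse_family)
  (F : nat -> fin_graph) (f : forall m n, F m -> F n) : Prop :=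
  [/\ forall n, mem T (F n),
      forall m n, n <= m -> dist T (f m n),
      forall k m n, n <= m -> m <= k -> f m n \o f k m =1 f k n,
      forall A : fin_graph, mem T A -> exists n (g : F n -> A), dist T g &
      forall m (A : fin_graph) (g : A -> F m), dist T g ->
        exists n (h : F n -> A), [/\ m <= n, dist T h & g \o h =1 f n m]].

Definition inv_limit (F : nat -> fin_graph) (f : forall m n, F m -> F n)
  (x : forall n, F n) : Prop :=
  forall m n, n <= m -> f m n (x m) = x n.

Definition limit_edge (F : nat -> fin_graph) (x y : forall n, F n) : Prop :=
  forall n, edge (x n) (y n).

Arguments fraisse_sequence T F f : clear implicits.
Arguments inv_limit F f x : clear implicits.
Arguments limit_edge F x y : clear implicits.

From mathcomp Require Import all_boot.

Set Implicit Arguments.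
Unset Strict Implicit.

(* For
   transitivity, suppose x ~ y ~ z in the limit but x_m, z_m are not adjacent;
   then x_m, y_m, z_m are distinct.  Split the edge {x_m, y_m} and project the
   split graph back onto F_m by sending the new vertex to y_m.  The Fraisse
   property lifts this projection to some F_n, where the path x_n - y_n - z_n
   maps to a path in the split graph from x_m to z_m through the fibre of y_m;
   but the fibre of y_m is no longer adjacent to both x_m and z_m. *)

Lemma epimorphism_edge (B A : fin_graph) (g : B -> A) (b1 b2 : B) :
  epimorphism g -> edge b1 b2 -> edge (g b1) (g b2).
Proof. by case=> _ gE e12; apply/gE; exists b1, b2. Qed.

Lemma split_to_fibre (G : fin_graph) (a b c : G) (u : split_graph a b) :
  c != b -> split_to b u = c -> u = Some c.
Proof.
by move=> ncb; case: u => [u /= -> // | /= bc]; rewrite bc eqxx in ncb.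
Qed.

Lemma split_to_no_path (G : fin_graph) (a b c : G) (u v w : split_graph a b) :
  a != b -> c != a -> c != b ->
  split_to b u = a -> split_to b v = b -> split_to b w = c ->
  ~~ (edge u v && edge v w).
Proof.
move=> nab nca ncb /(split_to_fibre nab) -> + /(split_to_fibre ncb) ->.
move: nab nca ncb => /negbTE nab /negbTE nca /negbTE ncb.
by case: v => [v /= -> | _] /=; rewrite ?nab ?nca ?ncb ?eqxx /= ?andbF.
Qed.

Section FraisseLimit.
Variables (T : proj_fraisse_family) (F : nat -> fin_graph) (f : forall m n, F m -> F n).
Hypothesis fseqF : fraisse_sequence T F f.

Lemma inv_limit_lift m (A : fin_graph) (g : A -> F m) : dist T g ->
  exists n (h : F n -> A), epimorphism h /\
    forall x, inv_limit F f x -> g (h (x n)) = x m.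
Proof.
case: fseqF => _ _ _ _ fraisseF /fraisseF [n [h [le_mn dist_h gh]]].
have [_ _ epi_h] := dist_epi dist_h.
by exists n, h; split=> // x limx; rewrite [g _]gh (limx _ _ le_mn).
Qed.

Lemma limit_edge_refl x : limit_edge F x x.
Proof. by move=> n; apply: edge_refl. Qed.

Lemma limit_edge_sym x y : limit_edge F x y -> limit_edge F y x.
Proof. by move=> exy n; rewrite edge_sym. Qed.

Lemma limit_edge_trans x y z : allows_splitting_edges T ->
  inv_limit F f x -> inv_limit F f y -> inv_limit F f z ->
  limit_edge F x y -> limit_edge F y z -> limit_edge F x z.
Proof.
move=> splitT limx limy limz exy eyz m; apply: contraT => nexz.
have nxy : x m != y m by apply: contraNneq nexz => ->; apply: eyz.
have nzx : z m != x m by apply: contraNneq nexz => ->; apply: edge_refl.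
have nzy : z m != y m by apply: contraNneq nexz => ->; apply: exy.
have [memF _] := fseqF.
have [_ _ dist_to_y] := splitT _ (memF m) _ _ nxy (exy m).
have [n [h [epi_h hE]]] := inv_limit_lift dist_to_y.
have := split_to_no_path nxy nzx nzy (hE _ limx) (hE _ limy) (hE _ limz).
by rewrite !(epimorphism_edge epi_h).
Qed.

End FraisseLimit.

Theorem mainTheorem1 (T : proj_fraisse_family) (F : nat -> fin_graph)
  (f : forall m n, F m -> F n) :
  allows_splitting_edges T -> fraisse_sequence T F f ->
  (* the edge relation of the inverse limit is an equivalence relation *)
  (forall x, inv_limit F f x -> limit_edge F x x) /\
  (forall x y, inv_limit F f x -> inv_limit F f y ->
     limit_edge F x y -> limit_edge F y x) /\
  (forall x y z, inv_limit F f x -> inv_limit F f y -> inv_limit F f z ->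
     limit_edge F x y -> limit_edge F y z -> limit_edge F x z).
Proof.
move=> splitT fseqF; split; first by move=> x _; apply: limit_edge_refl.
split; first by move=> x y _ _; apply: limit_edge_sym.
by move=> x y z; apply: limit_edge_trans fseqF x y z splitT.
Qed.
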